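(* For each positive integer $k$ there is $c_k>0$ such that the following holds. Suppose $P$ is a complete polynomial of degree $k$ with integer coefficients in its binomial representation. If $x$ is sufficiently large and $1<w<(\log x)/2$ is an integer, then the set $X$ of integers $y\in[x,(1+1/k)x)$ such that $P(y)$ has no prime divisor at most $w$ satisfies $|X|\ge c_k(\log w)^{-k}x$.
   Context: Every real polynomial of degree $k$ can be written as $P(x)=\sum_{i=0}^k\alpha_i\binom{x}{i}$; $P$ has integer coefficients in its binomial representation if all $\alpha_i$ are integers. $P$ is complete if every sufficiently large positive integer is a sum of distinct terms of $(P(m))_{m\ge1}$. $\log$ is the natural logarithm. *)

From Stdlib Require Import Reals ZArith List Znumtheory.
Open Scope R_scope.

(* Binomial coefficient C(n, i) on naturals (Pascal recursion);
   C(n,i) = 0 for i > n, as for the polynomial binom(x,i) at x = n. *)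
Fixpoint binom (n i : nat) : nat :=
  match n, i with
  | _, O => 1%nat
  | O, S _ => 0%nat
  | S n', S i' => (binom n' i' + binom n' i)%nat
  end.

Fixpoint Pbin_aux (alpha : nat -> Z) (j : nat) (y : nat) : Z :=
  match j with
  | O => (alpha 0%nat * Z.of_nat (binom y 0))%Z
  | S j' => (Pbin_aux alpha j' y + alpha j * Z.of_nat (binom y j))%Z
  end.

Definition Pbin (k : nat) (alpha : nat -> Z) (y : nat) : Z := Pbin_aux alpha k y.

Definition sum_vals (P : nat -> Z) (S : list nat) : Z :=
  fold_right (fun m acc => (P m + acc)%Z) 0%Z S.

Definition complete (P : nat -> Z) : Prop :=
  exists N : nat, forall n : nat, (N <= n)%nat -> (1 <= n)%nat ->
    exists S : list nat, NoDup S /\ Forall (fun m => (1 <= m)%nat) S /\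
      sum_vals P S = Z.of_nat n.

Definition no_small_prime_divisor (w : nat) (v : Z) : Prop :=
  forall p : Z, prime p -> (p <= Z.of_nat w)%Z -> ~ (p | v)%Z.

(* Whether a prime p divides P(y) depends only on y modulo q_p = p ^ e_p, with
   e_p = k! for p <= k and e_p = 1 for p > k, because p ^ e_p divides no i!
   with i <= k.  By the Chinese remainder theorem the y for which P(y) has no
   prime factor <= w form a set periodic modulo Q = prod_(p <= w) q_p, which
   has c_p admissible residues modulo each q_p.  Completeness forbids p from
   dividing every value of P, so c_p >= 1; for p > k the integer polynomial
   k! P has at most k roots modulo p, so c_p >= p - k.  Mertens' estimate
   sum_(p <= w) 1/p <= ln ln w + O(1), derived from Chebyshev's bound
   prod_(p <= n) p <= 4 ^ n, then bounds the density prod_p c_p / q_p below by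
   c_k (ln w) ^ -k.  Finally Q <= 4 ^ w K_k <= x / (4 k) once w < (ln x) / 2
   and x is large, so [x, (1 + 1/k) x) contains many full periods. *)

From Stdlib Require Import Reals ZArith List Znumtheory Lra Lia Psatz.
From HB Require Import structures.
From mathcomp Require Import all_boot zify.
Set Warnings "-notation-overridden -redundant-canonical-projection".
Set Implicit Arguments.
Unset Strict Implicit.
Unset Printing Implicit Defensive.
Open Scope nat_scope.

Lemma big_nat_recr_cond (T : Type) (idx : T) (op : Monoid.law idx)
    m n (P : pred nat) (F : nat -> T) : m <= n ->
  \big[op/idx]_(m <= i < n.+1 | P i) F i =
  op (\big[op/idx]_(m <= i < n | P i) F i) (if P n then F n else idx).
Proof. by move=> le_mn; rewrite big_mkcond big_nat_recr // -big_mkcond. Qed.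

(** * Factorials and binomial coefficients modulo primes *)

Lemma binomE n i : binom n i = 'C(n, i).
Proof. by elim: n i => [|n IHn] [|i] //=; rewrite binS !IHn addnC. Qed.

Lemma prime_ndvd_fact p n : prime p -> n < p -> ~~ (p %| n`!).
Proof.
move=> p_pr; elim: n => [|n IHn] lt_np; first by rewrite Euclid_dvd1.
by rewrite factS Euclid_dvdM // negb_or gtnNdvd // IHn // ltnW.
Qed.

Lemma eqn_modM2r_prime p e a b n : prime p -> ~~ (p ^ e %| n) ->
  a * n = b * n %[mod p ^ e] -> a = b %[mod p].
Proof.
move=> p_pr ndvd_n; wlog le_ba : a b / b <= a.
  by move=> W; case: (leqP b a) => [/W // | /ltnW/W W' /esym/W'].
move/eqP; rewrite eqn_mod_dvd ?leq_mul2r ?le_ba ?orbT // -mulnBl => dvd_e.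
apply/eqP; rewrite eqn_mod_dvd //; apply: contraR ndvd_n => ndvd_ab.
by rewrite -(@Gauss_dvdr _ (a - b)) // coprimeXl // prime_coprime.
Qed.

Lemma ffact_addn_mod q y i : (y + q) ^_ i = y ^_ i %[mod q].
Proof.
elim: i y => [|i IHi] [|y] //.
  by rewrite ffact0n add0n ffactnS -modnMml modnn.
by rewrite addSn !ffactSS -modnMm -[RHS]modnMm IHi -addSn modnDr.
Qed.

(* [i`!] is cancelled modulo [p] because [p ^ e] does not divide it. *)
Lemma bin_addn_mod p e y i : prime p -> ~~ (p ^ e %| i`!) ->
  'C(y + p ^ e, i) = 'C(y, i) %[mod p].
Proof.
move=> p_pr ndvd; apply: (@eqn_modM2r_prime p e _ _ i`! p_pr ndvd).
by rewrite !bin_ffact ffact_addn_mod.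
Qed.

(** * Products of prime powers and Chebyshev's bound *)

Lemma coprime_prod_prime_powers (e : nat -> nat) m n : prime n ->
  coprime (\prod_(m <= p < n | prime p) p ^ e p) n.
Proof.
move=> n_pr; rewrite big_seq_cond.
apply: (big_ind (fun x => coprime x n)) => [|a b ca cb|p]; first exact: coprime1n.
  by rewrite coprimeMl ca cb.
rewrite mem_index_iota => /andP[/andP[_ lt_pn] p_pr].
by rewrite coprimeXl // prime_coprime // dvdn_prime2 // neq_ltn lt_pn.
Qed.

Lemma prod_prime_powers_dvd (e : nat -> nat) m n N :
  (forall p, prime p -> m <= p < n -> p ^ e p %| N) ->
  \prod_(m <= p < n | prime p) p ^ e p %| N.
Proof.
elim: n => [|n IHn] dvdN; first by rewrite big_geq.
have [lt_nm|le_mn] := ltnP n m; first by rewrite big_geq.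
have {}IHn : \prod_(m <= p < n | prime p) p ^ e p %| N.
  by apply: IHn => p p_pr /andP[le_mp lt_pn]; rewrite dvdN // le_mp ltnW.
rewrite big_nat_recr_cond //=; case: ifP => [n_pr|_]; last by rewrite muln1.
rewrite Gauss_dvd ?IHn ?dvdN ?le_mn ?ltnSn //.
exact/coprimeXr/coprime_prod_prime_powers.
Qed.

Lemma prod_primes_dvd m n N : (forall p, prime p -> m <= p < n -> p %| N) ->
  \prod_(m <= p < n | prime p) p %| N.
Proof.
move=> dvdN; rewrite (eq_bigr (fun p => p ^ 1)) => [|p _]; last by rewrite expn1.
by apply: prod_prime_powers_dvd => p p_pr lt_p; rewrite expn1 dvdN.
Qed.

Definition primorial n := \prod_(0 <= p < n.+1 | prime p) p.

Lemma bin_mid_le m : 'C(m.*2.+1, m) <= 4 ^ m.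
Proof.
have sum_bin : \sum_(i < m.*2.+2) 'C(m.*2.+1, i) = 2 ^ m.*2.+1.
  by rewrite (expnDn 1 1); apply: eq_bigr => i _; rewrite !exp1n !muln1.
have lt_m : m < m.*2.+2 by lia.
have lt_m1 : m.+1 < m.*2.+2 by lia.
rewrite (bigD1 (Ordinal lt_m)) // (bigD1 (Ordinal lt_m1)) /= in sum_bin; last first.
  by apply/eqP => /(congr1 val) /=; lia.
have sym : 'C(m.*2.+1, m.+1) = 'C(m.*2.+1, m).
  by rewrite -bin_sub; [congr 'C(_, _); lia | lia].
have -> : 4 ^ m = 2 ^ m.*2 by rewrite -mul2n expnM.
rewrite sym expnS in sum_bin; lia.
Qed.

Lemma primes_mid_dvd m : \prod_(m.+2 <= p < m.*2.+2 | prime p) p %| 'C(m.*2.+1, m).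
Proof.
apply: prod_primes_dvd => p p_pr /andP[lt_mp lt_p].
have : p %| (m.*2.+1)`! by rewrite dvdn_fact // prime_gt0.
rewrite -(bin_fact (_ : m <= m.*2.+1)); last lia.
rewrite !Euclid_dvdM // (negbTE (prime_ndvd_fact p_pr _)) //; last lia.
by rewrite (negbTE (prime_ndvd_fact p_pr _)) ?orbF //; lia.
Qed.

(* Erdos: the primes in [m + 2, 2 m + 1] all divide ['C(2 m + 1, m) <= 4 ^ m]. *)
Lemma primorial_le n : primorial n <= 4 ^ n.
Proof.
elim/ltn_ind: n => n IHn.
have [le_n2|lt_2n] := leqP n 2.
  by case: n le_n2 {IHn} => [|[|[|//]]] _; rewrite /primorial unlock.
case/boolP: (odd n) => [odd_n|even_n]; last first.
  case: n lt_2n even_n IHn => // n lt_2n even_n IHn.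
  have n_npr : ~~ prime n.+1.
    by apply/negP => /even_prime[n2|]; [rewrite n2 in lt_2n | rewrite (negbTE even_n)].
  rewrite /primorial big_nat_recr_cond //= (negbTE n_npr) muln1.
  by rewrite (leq_trans (IHn n _)) // leq_exp2l.
set m := n./2; have def_n : n = m.*2.+1.
  by rewrite -[LHS]odd_double_half odd_n.
rewrite def_n /primorial (@big_cat_nat _ _ _ m.+2) //=; last lia.
have -> : 4 ^ m.*2.+1 = 4 ^ m.+1 * 4 ^ m by rewrite -expnD; congr (_ ^ _); lia.
apply: leq_mul; first by apply: IHn; lia.
apply: leq_trans (bin_mid_le m); apply: dvdn_leq (primes_mid_dvd m).
by rewrite bin_gt0; lia.
Qed.

Lemma prod_prime_powers_divn_leq_fact n : \prod_(0 <= p < n.+1 | prime p) p ^ (n %/ p) <= n`!.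
Proof.
apply: dvdn_leq (fact_gt0 n) _; apply: prod_prime_powers_dvd => p p_pr _.
have [lt_np|le_pn] := ltnP n p; first by rewrite divn_small.
rewrite pfactor_dvdn ?fact_gt0 // logn_fact // big_ltn ?expn1 ?leq_addr //.
exact: leq_trans (prime_gt0 p_pr) le_pn.
Qed.

(** * Periodic sets and the Chinese remainder theorem *)

Definition periodic (A : pred nat) q := forall y, A (y + q) = A y.

Section PeriodicCount.
Variables (A : pred nat) (q : nat).
Hypotheses (q_gt0 : 0 < q) (A_per : periodic A q).

Lemma periodicM j y : A (y + j * q) = A y.
Proof.
elim: j => [|j IHj]; first by rewrite addn0.
by rewrite mulSn addnA addnAC A_per.
Qed.

Lemma periodic_mod y : A y = A (y %% q).
Proof. by rewrite {1}(divn_eq y q) addnC periodicM. Qed.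

Lemma count_iota_sum a n : count A (iota a n) = \sum_(i < n) A (a + i).
Proof.
elim: n a => [|n IHn] a; first by rewrite big_ord0.
by rewrite big_ord_recl /= IHn addn0; congr (_ + _); apply: eq_bigr => i _; rewrite addSnnS.
Qed.

(* [j |-> (c + j * M) mod q] permutes the residues mod [q]. *)
Lemma sum_periodic_progression M c : coprime M q ->
  \sum_(j < q) A (c + j * M) = count A (iota 0 q).
Proof.
move=> coMq; rewrite count_iota_sum.
pose h (j : 'I_q) : 'I_q := Ordinal (ltn_pmod (c + j * M) q_gt0).
have h_inj : injective h.
  move=> j1 j2 /(congr1 val)/eqP; rewrite /= eqn_modDl => eq_j.
  apply: val_inj => /=; wlog le_j : j1 j2 eq_j / j1 <= j2.
    by move=> W; case: (leqP j1 j2) => [|/ltnW] /W ->; rewrite // eq_sym.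
  move: eq_j; rewrite eq_sym eqn_mod_dvd ?leq_mul2r ?le_j ?orbT // -mulnBl.
  rewrite Gauss_dvdl; last by rewrite coprime_sym.
  have lt_q : j2 - j1 < q by have := ltn_ord j2; lia.
  by case: (posnP (j2 - j1)) => [|pos /(dvdn_leq pos)]; lia.
rewrite [RHS](reindex_inj h_inj); apply: eq_bigr => j _.
by rewrite add0n -periodic_mod.
Qed.

Lemma count_periodic_shift a : count A (iota a q) = count A (iota 0 q).
Proof.
rewrite count_iota_sum -(@sum_periodic_progression 1 a (coprime1n q)).
by apply: eq_bigr => j _; rewrite muln1.
Qed.

End PeriodicCount.

Lemma count_iota_blocks (A : pred nat) a M t :
  count A (iota a (t * M)) = \sum_(j < t) count A (iota (a + j * M) M).
Proof.
elim: t => [|t IHt]; first by rewrite big_ord0.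
by rewrite big_ord_recr /= mulSn addnC iotaD count_cat IHt.
Qed.

Lemma count_periodic_window (A : pred nat) M a L : 0 < M -> periodic A M ->
  L %/ M * count A (iota 0 M) <= count A (iota a L).
Proof.
move=> M_gt0 A_per; rewrite {2}(divn_eq L M) iotaD count_cat.
apply: leq_trans (leq_addr _ _); rewrite count_iota_blocks.
under eq_bigr do rewrite count_periodic_shift //.
by rewrite sum_nat_const card_ord.
Qed.

Lemma count_periodic_crt (A B : pred nat) M q : 0 < M -> 0 < q -> coprime M q ->
  periodic A M -> periodic B q ->
  count (predI A B) (iota 0 (M * q)) = count A (iota 0 M) * count B (iota 0 q).
Proof.
move=> M_gt0 q_gt0 coMq A_per B_per.
rewrite mulnC count_iota_blocks.
have blockE (j : 'I_q) :
    count (predI A B) (iota (0 + j * M) M) = \sum_(s < M) A s * B (s + j * M).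
  rewrite count_iota_sum; apply: eq_bigr => s _.
  by rewrite /= add0n addnC (periodicM A_per) mulnb.
rewrite (eq_bigr _ (fun j _ => blockE j)) exchange_big count_iota_sum big_distrl /=.
apply: eq_bigr => s _; rewrite -big_distrr /= add0n.
by rewrite (sum_periodic_progression q_gt0 B_per).
Qed.

Section Sieve.
Variables (e : nat -> nat) (A : nat -> pred nat).
Hypothesis A_per : forall p, prime p -> periodic (A p) (p ^ e p).

Definition sifted n y := all (fun p => prime p ==> A p y) (iota 0 n).
Definition sieve_modulus n := \prod_(0 <= p < n | prime p) p ^ e p.
Definition sieve_count n := \prod_(0 <= p < n | prime p) count (A p) (iota 0 (p ^ e p)).

Lemma sieve_modulus_gt0 n : 0 < sieve_modulus n.
Proof. by apply: prodn_cond_gt0 => p p_pr; rewrite expn_gt0 prime_gt0. Qed.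

Lemma siftedS n y : sifted n.+1 y = sifted n y && (prime n ==> A n y).
Proof. by rewrite /sifted -addn1 iotaD all_cat /= andbT. Qed.

Lemma sifted_periodic_count n : periodic (sifted n) (sieve_modulus n) /\
  count (sifted n) (iota 0 (sieve_modulus n)) = sieve_count n.
Proof.
elim: n => [|n [IHper IHcount]]; first by rewrite /sieve_modulus /sieve_count !big_geq.
rewrite /sieve_modulus /sieve_count !big_nat_recr_cond //= -/(sieve_modulus n) -/(sieve_count n).
case: (boolP (prime n)) => [n_pr|n_npr]; last first.
  by rewrite !muln1; split => [y|]; [|rewrite -IHcount; apply: eq_count => y];
    rewrite !siftedS (negbTE n_npr) !andbT // IHper.
have qn_gt0 : 0 < n ^ e n by rewrite expn_gt0 prime_gt0.
split => [y|].
  by rewrite !siftedS n_pr /= (periodicM (A_per n_pr)) mulnC (periodicM IHper).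
rewrite -IHcount -count_periodic_crt ?sieve_modulus_gt0 ?coprimeXr ?coprime_prod_prime_powers
  //; last exact: A_per.
by apply: eq_count => y; rewrite siftedS n_pr.
Qed.

Lemma count_sifted_window n a L :
  L %/ sieve_modulus n * sieve_count n <= count (sifted n) (iota a L).
Proof.
have [per cnt] := sifted_periodic_count n.
by rewrite -cnt; apply: count_periodic_window (sieve_modulus_gt0 n) per.
Qed.

End Sieve.

(** * Integer polynomial functions modulo a prime *)

Lemma Zprime_of_nat p : prime p -> Znumtheory.prime (Z.of_nat p).
Proof.
move=> /primeP[p_gt1 dvd_p]; apply/prime_alt; split; first lia.
move=> n n_range [c def_p].
have : (Z.to_nat n %| p).
  apply/dvdnP; exists (Z.to_nat c); apply: Nat2Z.inj.
  rewrite Nat2Z.inj_mul !Z2Nat.id; nia.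
by move=> /dvd_p /orP[] /eqP; lia.
Qed.

Lemma Zprime_to_nat z : Znumtheory.prime z -> exists2 p, z = Z.of_nat p & prime p.
Proof.
move=> z_pr; have z_gt1 : (1 < z)%Z by case: z_pr.
exists (Z.to_nat z); first lia.
apply/primeP; split; first lia.
move=> d /dvdnP[c def_z]; have : (Z.of_nat d | z)%Z by exists (Z.of_nat c); nia.
by move=> /(prime_divisors _ z_pr) dvd_z; apply/orP; lia.
Qed.

Definition Zdvdb (p : nat) (v : Z) : bool := (v mod Z.of_nat p =? 0)%Z.

Lemma ZdvdbP p v : 0 < p -> reflect (Z.of_nat p | v)%Z (Zdvdb p v).
Proof. by move=> p_gt0; apply: (iffP (Z.eqb_spec _ _)); rewrite -Z.mod_divide; lia. Qed.

Lemma Zdvdb_congr p a b : 0 < p -> (Z.of_nat p | a - b)%Z -> Zdvdb p a = Zdvdb p b.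
Proof.
move=> p_gt0 dvd_ab; apply/(ZdvdbP _ p_gt0)/(ZdvdbP _ p_gt0) => dvd.
  by have := Z.divide_sub_r _ _ _ dvd dvd_ab; rewrite Z.sub_sub_distr Z.sub_diag.
by have := Z.divide_add_r _ _ _ dvd_ab dvd; rewrite Z.sub_add.
Qed.

Lemma Zdvd_of_eqn_mod p a b : a = b %[mod p] -> (Z.of_nat p | Z.of_nat a - Z.of_nat b)%Z.
Proof.
move=> eq_ab; exists (Z.of_nat (a %/ p) - Z.of_nat (b %/ p))%Z.
rewrite {1}(divn_eq a p) {1}(divn_eq b p) eq_ab !Nat2Z.inj_add !Nat2Z.inj_mul; ring.
Qed.

Lemma Zprime_ndvd_fact p n : prime p -> n < p -> ~ (Z.of_nat p | Z.of_nat n`!)%Z.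
Proof.
move=> p_pr lt_np [c def_fact]; have := prime_gt0 p_pr; have := fact_gt0 n => ? ?.
move: (prime_ndvd_fact p_pr lt_np) => /negP; apply; apply/dvdnP.
by exists (Z.to_nat c); apply: Nat2Z.inj; rewrite Nat2Z.inj_mul Z2Nat.id //; nia.
Qed.

(* A function [Z -> Z] of degree at most [d], characterised by the factor
   theorem: [f z = f r + (z - r) h z] with [h] of degree at most [d - 1]. *)
Fixpoint poly_fun (d : nat) (f : Z -> Z) : Prop :=
  match d with
  | O => forall z, f z = f 0%Z
  | S d' => forall r, exists2 h, poly_fun d' h & forall z, f z = (f r + (z - r) * h z)%Z
  end.

Lemma poly_fun_const d c : poly_fun d (fun _ => c).
Proof.
by elim: d c => [|d IHd] c //= r; exists (fun _ => 0%Z) => [|z]; [exact: IHd | ring].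
Qed.

Lemma poly_funS d f : poly_fun d f -> poly_fun d.+1 f.
Proof.
elim: d f => [|d IHd] f /= f_poly r.
  by exists (fun _ => 0%Z) => // z; rewrite f_poly (f_poly r); ring.
by have [h /IHd h_poly f_eq] := f_poly r; exists h.
Qed.

Lemma poly_funD d f g : poly_fun d f -> poly_fun d g -> poly_fun d (fun z => f z + g z)%Z.
Proof.
elim: d f g => [|d IHd] f g /= f_poly g_poly; first by move=> z; rewrite f_poly g_poly.
move=> r; have [hf hf_poly f_eq] := f_poly r; have [hg hg_poly g_eq] := g_poly r.
by exists (fun z => hf z + hg z)%Z => [|z]; [apply: IHd | rewrite f_eq g_eq; ring].
Qed.

Lemma poly_funZ d c f : poly_fun d f -> poly_fun d (fun z => c * f z)%Z.
Proof.
elim: d f => [|d IHd] f /= f_poly; first by move=> z; rewrite f_poly.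
move=> r; have [h h_poly f_eq] := f_poly r.
by exists (fun z => c * h z)%Z => [|z]; [apply: IHd | rewrite f_eq; ring].
Qed.

Lemma poly_funMX d f a : poly_fun d f -> poly_fun d.+1 (fun z => f z * (z - a))%Z.
Proof.
elim: d f => [|d IHd] f f_poly r.
  by exists (fun _ => f 0%Z) => // z; rewrite (f_poly z) (f_poly r); ring.
have [h h_poly f_eq] := f_poly r.
exists (fun z => h z * (z - a) + f r)%Z => [|z]; last by rewrite (f_eq z); ring.
exact: poly_funD (IHd _ h_poly) (poly_fun_const _ (f r)).
Qed.

Lemma poly_fun_roots d f p m s : poly_fun d f -> prime p -> ~ (Z.of_nat p | f m)%Z ->
  uniq s -> all (fun r => r < p) s -> all (fun r => Zdvdb p (f (Z.of_nat r))) s ->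
  size s <= d.
Proof.
move=> + p_pr; have p_gt0 := prime_gt0 p_pr; have pZ_pr := Zprime_of_nat p_pr.
elim: d f s => [|d IHd] f [|r0 s] //= f_poly ndvd_m.
  by move=> _ _ /andP[/(ZdvdbP _ p_gt0)]; rewrite f_poly -(f_poly m).
move=> /andP[r0_s uniq_s] /andP[lt_r0p lt_sp] /andP[/(ZdvdbP _ p_gt0) dvd_r0 dvd_s].
have [h h_poly f_eq] := f_poly (Z.of_nat r0).
have ndvd_h : ~ (Z.of_nat p | h m)%Z.
  by move=> dvd_h; apply: ndvd_m; rewrite f_eq; apply/Z.divide_add_r/Z.divide_mul_r.
apply: (IHd h s h_poly ndvd_h uniq_s lt_sp); apply/allP => r r_s.
have /(ZdvdbP _ p_gt0) := allP dvd_s r r_s; rewrite f_eq => dvd_r.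
have /(prime_mult _ pZ_pr)[dvd_diff|] :
    (Z.of_nat p | (Z.of_nat r - Z.of_nat r0) * h (Z.of_nat r))%Z.
  by move: (Z.divide_sub_r _ _ _ dvd_r dvd_r0); rewrite Z.add_simpl_l.
- have lt_rp := allP lt_sp r r_s.
  have [c def_diff] := dvd_diff; have c0 : c = 0%Z by nia.
  have r_r0 : r = r0 by rewrite c0 in def_diff; lia.
  by move: r0_s; rewrite -r_r0 r_s.
- by move/(ZdvdbP _ p_gt0).
Qed.

Lemma count_poly_fun_roots d f p m : poly_fun d f -> prime p -> ~ (Z.of_nat p | f m)%Z ->
  count (fun r => Zdvdb p (f (Z.of_nat r))) (iota 0 p) <= d.
Proof.
move=> f_poly p_pr ndvd_m; rewrite -size_filter.
apply: poly_fun_roots f_poly p_pr ndvd_m _ _ _; first by rewrite filter_uniq ?iota_uniq.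
  by apply/allP => r; rewrite mem_filter mem_iota => /andP[_].
exact: filter_all.
Qed.

Fixpoint Zffact (z : Z) (i : nat) : Z :=
  match i with O => 1%Z | S i' => (Zffact z i' * (z - Z.of_nat i'))%Z end.

Lemma poly_fun_Zffact i : poly_fun i (fun z => Zffact z i).
Proof. by elim: i => [|i IHi] //=; apply: poly_funMX. Qed.

Lemma Zffact_of_nat y i : Zffact (Z.of_nat y) i = Z.of_nat (y ^_ i).
Proof.
elim: i => [|i IHi] //=; rewrite ffactnSr Nat2Z.inj_mul IHi.
have [le_iy|lt_yi] := leqP i y; first by rewrite Nat2Z.inj_sub //; apply/leP.
by rewrite ffact_small.
Qed.

Fixpoint ffact_comb (c : nat -> Z) (j : nat) (z : Z) : Z :=
  match j with
  | O => (c 0%N * Zffact z 0)%Z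
  | S j' => (ffact_comb c j' z + c j * Zffact z j)%Z
  end.

Lemma poly_fun_ffact_comb c j : poly_fun j (ffact_comb c j).
Proof.
elim: j => [|j IHj]; first by [].
exact: poly_funD (poly_funS IHj) (poly_funZ _ (poly_fun_Zffact _)).
Qed.

Lemma ffact_comb_scaled_Pbin_aux (c : nat -> Z) K alpha j y :
  (forall i, i <= j ->
     (c i * Zffact (Z.of_nat y) i = K * (alpha i * Z.of_nat (binom y i)))%Z) ->
  ffact_comb c j (Z.of_nat y) = (K * Pbin_aux alpha j y)%Z.
Proof.
elim: j => [|j IHj] cE; first exact: cE.
transitivity (ffact_comb c j (Z.of_nat y) + c j.+1 * Zffact (Z.of_nat y) j.+1)%Z; first by [].
rewrite IHj => [|i le_ij]; last exact/cE/ltnW.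
rewrite cE //; change (Pbin_aux alpha j.+1 y) with
  (Pbin_aux alpha j y + alpha j.+1 * Z.of_nat (binom y j.+1))%Z.
ring.
Qed.

Lemma ffact_comb_Pbin k alpha y :
  ffact_comb (fun i => alpha i * Z.of_nat (k`! %/ i`!))%Z k (Z.of_nat y) =
  (Z.of_nat k`! * Pbin k alpha y)%Z.
Proof.
apply: ffact_comb_scaled_Pbin_aux => i le_ik; rewrite -Z.mul_assoc Zffact_of_nat.
have -> : (Z.of_nat (k`! %/ i`!) * Z.of_nat (y ^_ i) = Z.of_nat k`! * Z.of_nat (binom y i))%Z.
  rewrite -bin_ffact binomE -!Nat2Z.inj_mul; congr Z.of_nat.
  have /dvdnP[c def_k] : i`! %| k`! by rewrite -(bin_fact le_ik) mulnCA dvdn_mulr.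
  by rewrite def_k mulnK ?fact_gt0 // multE -mulnA (mulnC i`!).
ring.
Qed.

(** * The local conditions at each prime *)

Definition Pbin_exp k p := if p <= k then k`! else 1.
Definition Pbin_ndvd k alpha p : pred nat := fun y => ~~ Zdvdb p (Pbin k alpha y).

Lemma Pbin_exp_ndvd_fact k p i : prime p -> i <= k -> ~~ (p ^ Pbin_exp k p %| i`!).
Proof.
move=> p_pr le_ik; rewrite /Pbin_exp; case: leqP => [_|lt_kp]; last first.
  by rewrite expn1 prime_ndvd_fact // (leq_ltn_trans le_ik).
apply/negP => /(dvdn_leq (fact_gt0 i)); apply/negP; rewrite -ltnNge.
apply: leq_ltn_trans (leq_fact le_ik) (leq_trans (ltn_expl _ (ltnSn 1)) _).
by rewrite leq_exp2r ?fact_gt0 ?prime_gt1.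
Qed.

Lemma Pbin_aux_addn_mod alpha p e j y : prime p -> (forall i, i <= j -> ~~ (p ^ e %| i`!)) ->
  (Z.of_nat p | Pbin_aux alpha j (y + p ^ e) - Pbin_aux alpha j y)%Z.
Proof.
move=> p_pr ndvd_fact; elim: j ndvd_fact => [|j IHj] ndvd_fact /=.
  by rewrite !binomE !bin0; exists 0%Z; ring.
have -> : forall a b c d : Z, (a + c - (b + d) = (a - b) + (c - d))%Z by move=> *; ring.
apply: Z.divide_add_r; first by apply: IHj => i le_ij; rewrite ndvd_fact // ltnW.
rewrite -Z.mul_sub_distr_l; apply/Z.divide_mul_r/Zdvd_of_eqn_mod.
by rewrite !binomE; apply: bin_addn_mod p_pr (ndvd_fact _ (leqnn _)).
Qed.

Lemma Pbin_ndvd_periodic k alpha p : prime p ->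
  periodic (Pbin_ndvd k alpha p) (p ^ Pbin_exp k p).
Proof.
move=> p_pr y; congr negb; apply: Zdvdb_congr (prime_gt0 p_pr) _.
by apply: Pbin_aux_addn_mod => // i; apply: Pbin_exp_ndvd_fact.
Qed.

(* Were [p] to divide every value, it would divide every sum of values,
   yet [N p + 1] is such a sum for [N] large. *)
Lemma complete_ndvd P p : complete P -> 1 < p -> exists m, ~ (Z.of_nat p | P m)%Z.
Proof.
move=> [N sumsN] p_gt1; apply: Classical_Prop.NNPP => all_dvd.
have dvdP m : (Z.of_nat p | P m)%Z.
  by apply: Classical_Prop.NNPP => ndvd; apply: all_dvd; exists m.
have [S [_ [_ sumS]]] := sumsN (N * p + 1) ltac:(apply/leP; nia) ltac:(apply/leP; lia).
have dvd_sum : (Z.of_nat p | sum_vals P S)%Z.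
  by elim: S {sumS} => [|m S IHS] /=; [exact: Z.divide_0_r | exact: Z.divide_add_r].
rewrite sumS Nat2Z.inj_add Nat2Z.inj_mul in dvd_sum.
have /Z.divide_1_r : (Z.of_nat p | 1)%Z.
  by move/(Z.divide_add_cancel_r _ _ _ (Z.divide_factor_r _ _)): dvd_sum.
lia.
Qed.

Lemma count_Pbin_ndvd_gt0 k alpha p : prime p -> complete (Pbin k alpha) ->
  0 < count (Pbin_ndvd k alpha p) (iota 0 (p ^ Pbin_exp k p)).
Proof.
move=> p_pr P_compl; have [m ndvd_m] := complete_ndvd P_compl (prime_gt1 p_pr).
have q_gt0 : 0 < p ^ Pbin_exp k p by rewrite expn_gt0 prime_gt0.
rewrite -has_count; apply/hasP; exists (m %% p ^ Pbin_exp k p).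
  by rewrite mem_iota ltn_pmod.
rewrite -(periodic_mod (Pbin_ndvd_periodic k alpha p_pr)).
by apply/negP => /(ZdvdbP _ (prime_gt0 p_pr)).
Qed.

(* For [p > k], [p] does not divide [k`!], so the values of [P] divisible by [p]
   are the roots mod [p] of a polynomial function of degree [k]. *)
Lemma count_Pbin_ndvd_large k alpha p : prime p -> k < p -> complete (Pbin k alpha) ->
  p - k <= count (Pbin_ndvd k alpha p) (iota 0 p).
Proof.
move=> p_pr lt_kp P_compl; have pZ_pr := Zprime_of_nat p_pr.
set G := ffact_comb (fun i => alpha i * Z.of_nat (k`! %/ i`!))%Z k.
have GE y : G (Z.of_nat y) = (Z.of_nat k`! * Pbin k alpha y)%Z := ffact_comb_Pbin k alpha y.
have ndvd_fact := Zprime_ndvd_fact p_pr lt_kp.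
have dvdGE y : Zdvdb p (G (Z.of_nat y)) = Zdvdb p (Pbin k alpha y).
  apply/(ZdvdbP _ (prime_gt0 p_pr))/(ZdvdbP _ (prime_gt0 p_pr)); rewrite GE.
    by case/(prime_mult _ pZ_pr).
  exact: Z.divide_mul_r.
have [m ndvd_m] := complete_ndvd P_compl (prime_gt1 p_pr).
have roots : count (fun r => Zdvdb p (G (Z.of_nat r))) (iota 0 p) <= k.
  apply: (@count_poly_fun_roots k G p (Z.of_nat m) (poly_fun_ffact_comb _ k) p_pr).
  by rewrite GE => /(prime_mult _ pZ_pr)[].
have := count_predC (Pbin_ndvd k alpha p) (iota 0 p); rewrite size_iota.
suff : count (predC (Pbin_ndvd k alpha p)) (iota 0 p) <= k by lia.
by rewrite (eq_count (a2 := fun r => Zdvdb p (G (Z.of_nat r)))) // => y; rewrite /= negbK dvdGE.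
Qed.

(** * Real estimates and Mertens' theorems *)

Open Scope R_scope.

HB.instance Definition _ := Monoid.isComLaw.Build R 0 Rplus
  (fun x y z => esym (Rplus_assoc x y z)) Rplus_comm Rplus_0_l.
HB.instance Definition _ := Monoid.isComLaw.Build R 1 Rmult
  (fun x y z => esym (Rmult_assoc x y z)) Rmult_comm Rmult_1_l.

Lemma bigRplus_recr_cond n (P : pred nat) (F : nat -> R) :
  \big[Rplus/0]_(0 <= i < n.+1 | P i) F i =
  \big[Rplus/0]_(0 <= i < n | P i) F i + (if P n then F n else 0).
Proof. exact: big_nat_recr_cond. Qed.

Lemma exp_le x y : x <= y -> exp x <= exp y.
Proof. by case/Rle_lt_or_eq_dec => [/exp_increasing/Rlt_le // | ->]; apply: Rle_refl. Qed.

Lemma ln_le x y : 0 < x -> x <= y -> ln x <= ln y.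
Proof.
move=> x_gt0 /Rle_lt_or_eq_dec[/(ln_increasing _ _ x_gt0)/Rlt_le // | ->].
exact: Rle_refl.
Qed.

Lemma ln_ge_1_sub_inv u : 0 < u -> 1 - / u <= ln u.
Proof.
move=> u_gt0; have := exp_ineq1_le (ln (/ u)).
rewrite exp_ln ?ln_Rinv //; [lra | exact: Rinv_0_lt_compat].
Qed.

Lemma exp_neg_le_1_sub t : 0 <= t <= / 2 -> exp (- (t + 2 * t ^ 2)) <= 1 - t.
Proof.
move=> t_range; have t1_gt0 : 0 < 1 - t by lra.
have le_t : t / (1 - t) <= t + 2 * t ^ 2.
  apply: (Rmult_le_reg_r (1 - t)) => //; rewrite /Rdiv Rmult_assoc Rinv_l; nra.
apply: Rle_trans (exp_le (Ropp_le_contravar _ _ le_t)) _.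
rewrite exp_Ropp -[X in _ <= X]Rinv_inv; apply: Rinv_le_contravar; first exact: Rinv_0_lt_compat.
have -> : / (1 - t) = 1 + t / (1 - t) by field; lra.
exact: exp_ineq1_le.
Qed.

Lemma pow_le_decr d m n : 0 <= d <= 1 -> (m <= n)%N -> d ^ n <= d ^ m.
Proof.
move=> d01 /subnK <-; rewrite pow_add; have := pow_le d m ltac:(lra).
suff : d ^ (n - m) <= 1 by have := pow_le d (n - m) ltac:(lra); nra.
by rewrite -(pow1 (n - m)); apply: pow_incr; lra.
Qed.

Lemma INR_muln m n : INR (m * n)%N = INR m * INR n.
Proof. exact: mult_INR. Qed.

Lemma INR_expn m n : INR (m ^ n)%N = INR m ^ n.
Proof. by elim: n => [|n IHn] //=; rewrite expnS INR_muln IHn. Qed.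

Lemma INR_divn_lb n m : (0 < m)%N -> INR n / INR m <= INR (n %/ m) + 1.
Proof.
move=> m_gt0; have m_pos : 0 < INR m by apply/lt_0_INR/ltP.
apply: (Rmult_le_reg_r (INR m)) => //; rewrite /Rdiv Rmult_assoc Rinv_l ?Rmult_1_r; last lra.
by rewrite -S_INR -INR_muln; apply/le_INR/leP/ltnW/ltn_ceil.
Qed.

Section RealBigops.
Variables (I : Type) (r : seq I).

Lemma ler_bigRplus (P : pred I) (F G : I -> R) : (forall i, P i -> F i <= G i) ->
  \big[Rplus/0]_(i <- r | P i) F i <= \big[Rplus/0]_(i <- r | P i) G i.
Proof.
move=> le_FG; apply: (big_ind2 Rle) => [|a b c d|i /le_FG //]; first exact: Rle_refl.
exact: Rplus_le_compat.
Qed.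

Lemma ler_bigRplus_sub (P Q : pred I) (F : I -> R) : (forall i, P i -> Q i) ->
  (forall i, Q i -> 0 <= F i) ->
  \big[Rplus/0]_(i <- r | P i) F i <= \big[Rplus/0]_(i <- r | Q i) F i.
Proof.
move=> PQ F_ge0; rewrite big_mkcond [X in _ <= X]big_mkcond /=.
apply: ler_bigRplus => i _; case: ifP => [/PQ -> | _]; first exact: Rle_refl.
by case: ifP => [/F_ge0 // | _]; apply: Rle_refl.
Qed.

Lemma ler_bigRmult (P : pred I) (F G : I -> R) : (forall i, P i -> 0 <= F i <= G i) ->
  \big[Rmult/1]_(i <- r | P i) F i <= \big[Rmult/1]_(i <- r | P i) G i.
Proof.
move=> le_FG.
suff [] : 0 <= \big[Rmult/1]_(i <- r | P i) F i <= \big[Rmult/1]_(i <- r | P i) G i by [].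
by apply: (big_ind2 (fun a b => 0 <= a <= b)) => [|a b c d ? ?|i /le_FG //]; [lra | nra].
Qed.

Lemma bigRplus_Rmult_l (P : pred I) c (F : I -> R) :
  c * \big[Rplus/0]_(i <- r | P i) F i = \big[Rplus/0]_(i <- r | P i) (c * F i).
Proof. exact: (big_morph _ (Rmult_plus_distr_l c) (Rmult_0_r c)). Qed.

Lemma Ropp_bigRplus (P : pred I) (F : I -> R) :
  - (\big[Rplus/0]_(i <- r | P i) F i) = \big[Rplus/0]_(i <- r | P i) - F i.
Proof. exact: (big_morph _ Ropp_plus_distr Ropp_0). Qed.

Lemma exp_bigRplus (P : pred I) (F : I -> R) :
  exp (\big[Rplus/0]_(i <- r | P i) F i) = \big[Rmult/1]_(i <- r | P i) exp (F i).
Proof. exact: (big_morph _ exp_plus exp_0). Qed.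

Lemma ln_bigRmult (P : pred I) (F : I -> R) : (forall i, P i -> 0 < F i) ->
  ln (\big[Rmult/1]_(i <- r | P i) F i) = \big[Rplus/0]_(i <- r | P i) ln (F i).
Proof.
move=> F_gt0; rewrite -[RHS]ln_exp exp_bigRplus; congr ln.
by apply: eq_bigr => i /F_gt0 /exp_ln.
Qed.

Lemma Rinv_bigRmult (P : pred I) (F : I -> R) :
  / (\big[Rmult/1]_(i <- r | P i) F i) = \big[Rmult/1]_(i <- r | P i) / F i.
Proof. exact: (big_morph _ Rinv_mult Rinv_1). Qed.

Lemma INR_bigmuln (P : pred I) (F : I -> nat) :
  INR (\prod_(i <- r | P i) F i) = \big[Rmult/1]_(i <- r | P i) INR (F i).
Proof. exact: (big_morph _ INR_muln (erefl (INR 1))). Qed.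

End RealBigops.

Lemma bigRmult_const_ge d K n (P : pred nat) : 0 <= d <= 1 ->
  d ^ K <= \big[Rmult/1]_(0 <= i < n | P i && (i < K)%N) d.
Proof.
move=> d01; rewrite big_const_seq.
have -> : forall c, iter c (Rmult d) 1 = d ^ c by elim=> //= c ->.
apply: pow_le_decr => //; rewrite -size_filter.
rewrite -[X in (_ <= X)%N](size_iota 0).
apply: uniq_leq_size; first by rewrite filter_uniq ?iota_uniq.
by move=> i; rewrite mem_filter !mem_iota => /andP[/andP[_ ->]].
Qed.

Lemma INR_prime_gt0 p : prime p -> 0 < INR p.
Proof. by move=> /prime_gt0/ltP/lt_0_INR. Qed.

Lemma ln_INR_gt0 n : (2 <= n)%N -> 0 < ln (INR n).
Proof. by move=> /ltP/lt_1_INR n_gt1; rewrite -ln_1; apply: ln_increasing; lra. Qed.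

Lemma ln_INR_prime_ge0 p : prime p -> 0 <= ln (INR p).
Proof. by move=> /prime_gt1/ln_INR_gt0/Rlt_le. Qed.

Lemma fact_leq_expnn n : (n`! <= n ^ n)%N.
Proof.
elim: n => // n IHn; rewrite factS expnS leq_mul2l /=.
by apply: leq_trans IHn _; case: n => // n; rewrite leq_exp2r.
Qed.

Lemma sum_ln_primes_le n :
  \big[Rplus/0]_(0 <= p < n.+1 | prime p) ln (INR p) <= INR n * ln 4.
Proof.
rewrite -ln_bigRmult => [|p /INR_prime_gt0 //]; rewrite -INR_bigmuln -ln_pow; last lra.
apply: ln_le; first by apply/lt_0_INR/ltP/prodn_cond_gt0 => p /prime_gt0.
have -> : 4 = INR 4 by rewrite /=; lra.
by rewrite -INR_expn; apply/le_INR/leP/primorial_le.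
Qed.

Lemma sum_divn_ln_primes_le n : (1 <= n)%N ->
  \big[Rplus/0]_(0 <= p < n.+1 | prime p) (INR (n %/ p) * ln (INR p)) <= INR n * ln (INR n).
Proof.
move=> n_gt0; rewrite (eq_bigr (fun p => ln (INR (p ^ (n %/ p))))) => [|p p_pr]; last first.
  by rewrite INR_expn ln_pow //; apply: INR_prime_gt0.
rewrite -ln_bigRmult => [|p p_pr]; last by rewrite INR_expn; apply/pow_lt/INR_prime_gt0.
rewrite -INR_bigmuln -ln_pow; last exact/lt_0_INR/ltP.
apply: ln_le.
  by apply/lt_0_INR/ltP/prodn_cond_gt0 => p /prime_gt0 p_gt0; rewrite expn_gt0 p_gt0.
rewrite -INR_expn; apply/le_INR/leP.
exact: leq_trans (prod_prime_powers_divn_leq_fact n) (fact_leq_expnn n).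
Qed.

Definition sum_inv_primes n := \big[Rplus/0]_(0 <= p < n.+1 | prime p) / INR p.
Definition sum_ln_div_primes n :=
  \big[Rplus/0]_(0 <= p < n.+1 | prime p) (ln (INR p) / INR p).
(* The value making [sum_inv_primes_abel] an equality at [N = 2]. *)
Definition mertens_const := 1 + ln 4 / ln 2 - ln (ln 2).

(* Mertens' first theorem: in [n (ln p / p) <= (n %/ p) ln p + ln p], the first
   terms sum to at most [ln n! <= n ln n], the second ones to Chebyshev's bound. *)
Lemma sum_ln_div_primes_le n : (1 <= n)%N -> sum_ln_div_primes n <= ln (INR n) + ln 4.
Proof.
move=> n_gt0; have n_pos : 0 < INR n by apply/lt_0_INR/ltP.
apply: (Rmult_le_reg_l (INR n)) => //; rewrite bigRplus_Rmult_l Rmult_plus_distr_l.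
apply: Rle_trans (Rplus_le_compat _ _ _ _ (sum_divn_ln_primes_le n_gt0) (sum_ln_primes_le n)).
rewrite -big_split /=; apply: ler_bigRplus => p p_pr.
have p_pos := INR_prime_gt0 p_pr; have ln_p := ln_INR_prime_ge0 p_pr.
have := INR_divn_lb n (prime_gt0 p_pr).
have -> : INR n * (ln (INR p) / INR p) = INR n / INR p * ln (INR p) by field; lra.
nra.
Qed.

(* Abel summation of [1 / p = (ln p / p) / ln p] against Mertens' first theorem. *)
Lemma sum_inv_primes_abel N : (2 <= N)%N ->
  sum_inv_primes N - sum_ln_div_primes N / ln (INR N) <=
  ln (ln (INR N)) - 1 - ln 4 / ln (INR N) + mertens_const.
Proof.
elim: N => // N IHN; rewrite ltnS leq_eqVlt => /orP[/eqP <- | N_ge2].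
  rewrite /sum_inv_primes /sum_ln_div_primes /mertens_const !big_nat_recr_cond //=.
  rewrite !big_geq //=; replace (1 + 1) with 2 by lra.
  have := ln_lt_2 => ln2_gt0; apply: Req_le; field; lra.
have lnN := ln_INR_gt0 N_ge2; have N_pos : 0 < INR N by apply/lt_0_INR/ltP; lia.
have lnN1 : ln (INR N) < ln (INR N.+1) by apply: ln_increasing => //; apply: lt_INR; lia.
have -> : sum_inv_primes N.+1 - sum_ln_div_primes N.+1 / ln (INR N.+1) =
          sum_inv_primes N - sum_ln_div_primes N / ln (INR N.+1).
  rewrite /sum_inv_primes /sum_ln_div_primes !(bigRplus_recr_cond N.+1).
  case: (prime N.+1); last by rewrite !Rplus_0_r.
  by field; split; [lra | apply/not_0_INR].
have := ln_ge_1_sub_inv (Rdiv_lt_0_compat _ _ (Rlt_trans _ _ _ lnN lnN1) lnN).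
rewrite /Rdiv ln_mult ?ln_Rinv; [|lra|lra|exact: Rinv_0_lt_compat].
move: (sum_ln_div_primes_le (ltnW N_ge2)) (IHN N_ge2) lnN lnN1; rewrite /Rdiv.
set S := sum_ln_div_primes N; set L := ln (INR N); set L1 := ln (INR N.+1).
move=> S_le IH lnN lnN1.
have -> : / (L1 * / L) = L * / L1 by field; lra.
have iL1 : / L1 <= / L by apply: Rinv_le_contravar; lra.
have : S * (/ L - / L1) <= (L + ln 4) * (/ L - / L1) by apply: Rmult_le_compat_r; lra.
have -> : (L + ln 4) * (/ L - / L1) = 1 - L * / L1 + ln 4 * / L - ln 4 * / L1 by field; lra.
lra.
Qed.

Lemma sum_inv_primes_le N : (2 <= N)%N -> sum_inv_primes N <= ln (ln (INR N)) + mertens_const.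
Proof.
move=> N_ge2; have lnN := ln_INR_gt0 N_ge2.
have : sum_ln_div_primes N / ln (INR N) <= 1 + ln 4 / ln (INR N).
  have -> : 1 + ln 4 / ln (INR N) = (ln (INR N) + ln 4) / ln (INR N) by field; lra.
  apply: Rmult_le_compat_r; first exact/Rlt_le/Rinv_0_lt_compat.
  exact/sum_ln_div_primes_le/ltnW.
have := sum_inv_primes_abel N_ge2; lra.
Qed.

Lemma sum_inv_sq_le n : (1 <= n)%N ->
  \big[Rplus/0]_(0 <= m < n.+1 | (2 <= m)%N) / INR m ^ 2 <= 1 - / INR n.
Proof.
elim: n => // n IHn; rewrite ltnS leq_eqVlt => /orP[/eqP <- | n_gt0].
  by rewrite !bigRplus_recr_cond big_geq //= Rinv_1; lra.
rewrite bigRplus_recr_cond ifT //; have n_pos : 0 < INR n by apply/lt_0_INR/ltP.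
have : / INR n.+1 ^ 2 <= / INR n - / INR n.+1.
  rewrite S_INR; have -> : / INR n - / (INR n + 1) = / (INR n * (INR n + 1)) by field; lra.
  by apply: Rinv_le_contravar; nra.
have := IHn n_gt0; lra.
Qed.

(** * Density of the sieve and counting in the interval *)

(* [sieve_delta k] bounds the local density at each prime [p < 2 k]; the primes
   [p >= 2 k] contribute [exp (- k (ln ln w + mertens_const) - 2 k ^ 2)]. *)
Definition sieve_delta k := / INR ((2 * k) ^ k`!).
Definition density_const k :=
  sieve_delta k ^ (2 * k) * exp (- (INR k * mertens_const + 2 * INR k ^ 2)).

Lemma sieve_delta_range k : (0 < k)%N -> 0 < sieve_delta k <= 1.
Proof.
move=> k_gt0; have : 1 <= INR ((2 * k) ^ k`!).
  by apply/(le_INR 1)/leP; rewrite expn_gt0 muln_gt0 k_gt0.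
rewrite /sieve_delta; split; first by apply: Rinv_0_lt_compat; lra.
by rewrite -Rinv_1; apply: Rinv_le_contravar; lra.
Qed.

Lemma density_const_gt0 k : (0 < k)%N -> 0 < density_const k.
Proof.
move=> /sieve_delta_range[delta_gt0 _].
exact: Rmult_lt_0_compat (pow_lt _ _ delta_gt0) (exp_pos _).
Qed.

Section PbinDensity.
Variables (k : nat) (alpha : nat -> Z).
Hypotheses (k_gt0 : (0 < k)%N) (P_compl : complete (Pbin k alpha)).

Definition local_density p :=
  INR (count (Pbin_ndvd k alpha p) (iota 0 (p ^ Pbin_exp k p))) / INR (p ^ Pbin_exp k p).

Lemma sieve_density_prod n :
  INR (sieve_count (Pbin_exp k) (Pbin_ndvd k alpha) n) / INR (sieve_modulus (Pbin_exp k) n) =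
  \big[Rmult/1]_(0 <= p < n | prime p) local_density p.
Proof. by rewrite /Rdiv !INR_bigmuln Rinv_bigRmult -big_split. Qed.

Lemma local_density_small p : prime p -> (p < 2 * k)%N -> sieve_delta k <= local_density p.
Proof.
move=> p_pr lt_p2k; have q_pos : 0 < INR (p ^ Pbin_exp k p).
  by apply/lt_0_INR/ltP; rewrite expn_gt0 prime_gt0.
have le_q : INR (p ^ Pbin_exp k p) <= INR ((2 * k) ^ k`!).
  have e_range : (0 < Pbin_exp k p <= k`!)%N.
    by rewrite /Pbin_exp; case: (p <= k)%N; rewrite fact_gt0 ?leqnn.
  apply/le_INR/leP/(@leq_trans ((2 * k) ^ Pbin_exp k p)).
    by case/andP: e_range => e_gt0 _; rewrite leq_exp2r // ltnW.
  by case/andP: e_range => _; apply: leq_pexp2l; rewrite muln_gt0.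
have count_ge1 := count_Pbin_ndvd_gt0 p_pr P_compl.
rewrite /local_density /sieve_delta; apply: Rle_trans (Rinv_le_contravar _ _ q_pos le_q) _.
rewrite -[X in X <= _]Rmult_1_l; apply: Rmult_le_compat_r; first exact/Rlt_le/Rinv_0_lt_compat.
exact/(le_INR 1)/leP.
Qed.

Lemma local_density_large p : prime p -> (2 * k <= p)%N ->
  exp (- (INR k / INR p + 2 * (INR k / INR p) ^ 2)) <= local_density p.
Proof.
move=> p_pr le_2kp; have lt_kp : (k < p)%N by lia.
have p_pos := INR_prime_gt0 p_pr; have k_pos : 0 < INR k by apply/lt_0_INR/ltP.
have : INR (2 * k) <= INR p by apply/le_INR/leP.
rewrite INR_muln /= => le_2kp_R.
have cnt : INR p - INR k <= INR (count (Pbin_ndvd k alpha p) (iota 0 p)).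
  rewrite -minus_INR; last exact/leP/ltnW.
  exact/le_INR/leP/count_Pbin_ndvd_large.
rewrite /local_density /Pbin_exp leqNgt lt_kp expn1.
apply: Rle_trans (exp_neg_le_1_sub _) _.
  split; first by apply: Rmult_le_pos; [lra | exact/Rlt_le/Rinv_0_lt_compat].
  by apply: (Rmult_le_reg_r (INR p)) => //; rewrite /Rdiv Rmult_assoc Rinv_l; lra.
have -> : 1 - INR k / INR p = (INR p - INR k) / INR p by field; lra.
by apply: Rmult_le_compat_r => //; exact/Rlt_le/Rinv_0_lt_compat.
Qed.

Lemma sum_large_primes_le w : (2 <= w)%N ->
  \big[Rplus/0]_(0 <= p < w.+1 | prime p && ~~ (p < 2 * k)%N)
     (INR k / INR p + 2 * (INR k / INR p) ^ 2)
  <= INR k * (ln (ln (INR w)) + mertens_const) + 2 * INR k ^ 2.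
Proof.
move=> w_ge2; have k_pos : 0 < INR k by apply/lt_0_INR/ltP.
set f := fun p => INR k / INR p + 2 * (INR k / INR p) ^ 2.
apply: (@Rle_trans _ (\big[Rplus/0]_(0 <= p < w.+1 | prime p) f p)).
  apply: ler_bigRplus_sub => [p /andP[] // | p /INR_prime_gt0 p_pos].
  have kp_ge0 : 0 <= INR k / INR p by apply: Rmult_le_pos; [lra | exact/Rlt_le/Rinv_0_lt_compat].
  by rewrite /f; have := pow2_ge_0 (INR k / INR p); lra.
have -> : \big[Rplus/0]_(0 <= p < w.+1 | prime p) f p =
    INR k * sum_inv_primes w +
    2 * INR k ^ 2 * \big[Rplus/0]_(0 <= p < w.+1 | prime p) / INR p ^ 2.
  rewrite !bigRplus_Rmult_l -big_split; apply: eq_bigr => p /INR_prime_gt0 p_pos.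
  by rewrite /f /=; field; lra.
have sq_le : \big[Rplus/0]_(0 <= p < w.+1 | prime p) / INR p ^ 2 <= 1.
  apply: (@Rle_trans _ (\big[Rplus/0]_(0 <= m < w.+1 | (2 <= m)%N) / INR m ^ 2)).
    apply: ler_bigRplus_sub => [m /prime_gt1 // | m /ltnW/ltP/lt_0_INR m_pos].
    exact/Rlt_le/Rinv_0_lt_compat/pow_lt.
  have := sum_inv_sq_le (ltnW w_ge2).
  have : 0 < / INR w by apply/Rinv_0_lt_compat/lt_0_INR/ltP/ltnW.
  lra.
have := sum_inv_primes_le w_ge2; have := pow2_ge_0 (INR k); nra.
Qed.

Lemma sieve_density_lb w : (2 <= w)%N ->
  density_const k * / ln (INR w) ^ k <=
  INR (sieve_count (Pbin_exp k) (Pbin_ndvd k alpha) w.+1) /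
  INR (sieve_modulus (Pbin_exp k) w.+1).
Proof.
move=> w_ge2; have [delta_gt0 delta_le1] := sieve_delta_range k_gt0.
have lnw_k : 0 < ln (INR w) ^ k by apply/pow_lt/ln_INR_gt0.
rewrite sieve_density_prod (bigID (fun p => (p < 2 * k)%N)) /= /density_const Rmult_assoc.
apply: Rmult_le_compat.
- exact/pow_le/Rlt_le.
- by apply: Rmult_le_pos; [exact/Rlt_le/exp_pos | exact/Rlt_le/Rinv_0_lt_compat].
- have delta01 : 0 <= sieve_delta k <= 1 by lra.
  apply: Rle_trans (bigRmult_const_ge (2 * k) w.+1 prime delta01) _.
  apply: ler_bigRmult => p /andP[p_pr lt_p2k]; split; [lra | exact: local_density_small].
- pose f p := INR k / INR p + 2 * (INR k / INR p) ^ 2.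
  apply: (@Rle_trans _ (\big[Rmult/1]_(0 <= p < w.+1 | prime p && ~~ (p < 2 * k)%N) exp (- f p))).
    rewrite -exp_bigRplus -Ropp_bigRplus -[/ _](exp_ln (/ ln (INR w) ^ k)); last first.
      exact/Rinv_0_lt_compat.
    rewrite -exp_plus ln_Rinv // ln_pow; last exact/ln_INR_gt0.
    by apply: exp_le; have := sum_large_primes_le w_ge2; rewrite /f; lra.
  apply: ler_bigRmult => p /andP[p_pr]; rewrite -leqNgt => le_2kp.
  by split; [exact/Rlt_le/exp_pos | exact: local_density_large].
Qed.

End PbinDensity.

Definition sieve_base k := \prod_(0 <= p < k.+1 | prime p) p ^ k`!.

Lemma dvdn_prod_nat m n i (P : pred nat) (F : nat -> nat) :
  (m <= i < n)%N -> P i -> (F i %| \prod_(m <= j < n | P j) F j)%N.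
Proof.
move=> i_range Pi; rewrite big_mkcond (bigD1_seq i) ?mem_index_iota ?iota_uniq //= Pi.
exact: dvdn_mulr.
Qed.

Lemma Pbin_sieve_modulus_le k w :
  (sieve_modulus (Pbin_exp k) w.+1 <= 4 ^ w * sieve_base k)%N.
Proof.
apply: leq_trans (leq_mul (primorial_le w) (leqnn _)).
apply: dvdn_leq.
  rewrite muln_gt0; apply/andP; split; apply: prodn_cond_gt0 => p /prime_gt0 //.
  by rewrite expn_gt0 => ->.
apply: prod_prime_powers_dvd => p p_pr /andP[_ lt_pw]; rewrite /Pbin_exp.
case: leqP => [le_pk | _]; first by apply/dvdn_mull/dvdn_prod_nat.
by rewrite expn1; apply/dvdn_mulr/(dvdn_prod_nat id).
Qed.

Lemma INR_Z_to_nat z : (0 <= z)%Z -> INR (Z.to_nat z) = IZR z.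
Proof. by move=> z_ge0; rewrite INR_IZR_INZ Z2Nat.id. Qed.

Lemma nat_window x h : 0 <= x -> exists a L : nat,
  (forall y, (a <= y < a + L)%N -> x <= INR y < x + h) /\ h - 2 <= INR L.
Proof.
move=> x_ge0; have [ux1 ux2] := archimed x; have [uh1 uh2] := archimed h.
have ux_gt0 : (0 < up x)%Z by apply: lt_IZR; lra.
exists (Z.to_nat (up x)), (Z.to_nat (up h - 2)).
have [uh_ge2|uh_lt2] := Z.le_gt_cases 2 (up h); last first.
  have -> : Z.to_nat (up h - 2) = 0%N by lia.
  by split => [y /andP[] *|]; [lia | have := IZR_lt _ _ uh_lt2; simpl; lra].
have a_R : INR (Z.to_nat (up x)) = IZR (up x) by apply: INR_Z_to_nat; lia.
have L_R : INR (Z.to_nat (up h - 2)) = IZR (up h) - 2.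
  by rewrite INR_Z_to_nat ?minus_IZR //; lia.
split => [y /andP[/leP/le_INR le_ay /ltP lt_y] | ]; last lra.
have : INR y + 1 <= INR (Z.to_nat (up x)) + INR (Z.to_nat (up h - 2)).
  by rewrite -S_INR -plus_INR; apply: le_INR.
lra.
Qed.

Lemma In_mem (T : eqType) (x : T) s : In x s -> x \in s.
Proof. by elim: s => //= y s IHs [-> | /IHs x_s]; rewrite in_cons ?eqxx ?x_s ?orbT. Qed.

Lemma uniq_NoDup (T : eqType) (s : seq T) : uniq s -> NoDup s.
Proof.
elim: s => [|x s IHs] /=; first by constructor.
by case/andP => x_s /IHs; constructor => // /In_mem; apply/negP.
Qed.

Lemma sifted_no_small_prime_divisor k alpha w y :
  sifted (Pbin_ndvd k alpha) w.+1 y -> no_small_prime_divisor w (Pbin k alpha y).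
Proof.
move=> /allP sifted_y _ /Zprime_to_nat[p -> p_pr] le_pw /(ZdvdbP _ (prime_gt0 p_pr)) dvd_p.
have := sifted_y p; rewrite mem_iota p_pr /= => /(_ _)/negP; apply; [lia | exact: dvd_p].
Qed.

Lemma ln4_le : ln 4 <= 9 / 5.
Proof.
rewrite -[9 / 5]ln_exp; apply: ln_le; first lra.
have -> : exp (9 / 5) = exp (3 / 5) * exp (3 / 5) * exp (3 / 5).
  by rewrite -!exp_plus; congr exp; field.
have := exp_ineq1_le (3 / 5); nra.
Qed.

(* [ln 4 <= 9 / 5] turns [w < ln x / 2] into [4 ^ w <= x ^ (9 / 10)]. *)
Lemma pow4_le_of_lt_half_ln M x w : 1 <= M -> M ^ 10 <= x -> INR w < ln x / 2 ->
  M * 4 ^ w <= x.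
Proof.
move=> M_ge1 Mx w_lt; have M_pos : 0 < M by lra.
have x_pos : 0 < x by have := pow_R1_Rle M 10 M_ge1; lra.
have lnM : 10 * ln M <= ln x.
  have ten : INR 10 = 10 by rewrite INR_IZR_INZ.
  by rewrite -ten -ln_pow //; apply: ln_le => //; apply: pow_lt.
have lnM_ge0 : 0 <= ln M by rewrite -ln_1; apply: ln_le; lra.
have ln4_pos : 0 < ln 4 by rewrite -ln_1; apply: ln_increasing; lra.
have := ln4_le; have := pos_INR w => ? ?.
have -> : M * 4 ^ w = exp (ln M + INR w * ln 4).
  by rewrite exp_plus -ln_pow ?exp_ln //; [apply: pow_lt | ]; lra.
by rewrite -[X in _ <= X](exp_ln x) //; apply: exp_le; nra.
Qed.

Lemma count_sifted_lb k alpha w a L : (0 < k)%N -> complete (Pbin k alpha) -> (2 <= w)%N ->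
  (INR L - INR (sieve_modulus (Pbin_exp k) w.+1)) * (density_const k * / ln (INR w) ^ k)
  <= INR (count (sifted (Pbin_ndvd k alpha) w.+1) (iota a L)).
Proof.
move=> k_gt0 P_compl w_ge2.
set Q := sieve_modulus (Pbin_exp k) w.+1.
set C := sieve_count (Pbin_exp k) (Pbin_ndvd k alpha) w.+1.
have Q_pos : 0 < INR Q by apply/lt_0_INR/ltP/sieve_modulus_gt0.
have dens_le := sieve_density_lb k_gt0 P_compl w_ge2; rewrite -/Q -/C in dens_le.
have dens_ge0 : 0 <= density_const k * / ln (INR w) ^ k.
  apply/Rmult_le_pos/Rlt_le/Rinv_0_lt_compat/pow_lt/ln_INR_gt0 => //.
  exact/Rlt_le/density_const_gt0.
set cnt := count (sifted (Pbin_ndvd k alpha) w.+1) (iota a L).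
have count_ge : INR (L %/ Q) * INR C <= INR cnt.
  rewrite -INR_muln; apply/le_INR/leP/count_sifted_window => p.
  exact: Pbin_ndvd_periodic.
have div_ge := INR_divn_lb L (sieve_modulus_gt0 (Pbin_exp k) w.+1); rewrite -/Q in div_ge.
have C_ge0 := pos_INR C.
have [le_QL|lt_LQ] := Rle_or_lt (INR Q) (INR L); last by have := pos_INR cnt; nra.
have LQ_ge0 : 0 <= INR L - INR Q by lra.
apply: Rle_trans (Rmult_le_compat_l _ _ _ LQ_ge0 dens_le) _.
have -> : (INR L - INR Q) * (INR C / INR Q) = (INR L / INR Q - 1) * INR C by field; lra.
by apply: Rle_trans count_ge; apply: Rmult_le_compat_r; lra.
Qed.

Lemma size_length (T : Type) (s : seq T) : size s = length s.
Proof. by elim: s => //= x s ->. Qed.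

Lemma exists_sifted_in_interval k alpha w x : (0 < k)%N -> complete (Pbin k alpha) -> (2 <= w)%N ->
  4 * INR k * INR (sieve_modulus (Pbin_exp k) w.+1) <= x ->
  exists l : list nat, NoDup l /\
    Forall (fun y => x <= INR y /\ INR y < (1 + 1 / INR k) * x /\
                     no_small_prime_divisor w (Pbin k alpha y)) l /\
    INR (length l) >= density_const k / (4 * INR k) * / ln (INR w) ^ k * x.
Proof.
move=> k_gt0 P_compl w_ge2 Qx.
have k_pos : 0 < INR k by apply/lt_0_INR/ltP.
have Q_ge1 : 1 <= INR (sieve_modulus (Pbin_exp k) w.+1).
  exact/(le_INR 1)/leP/sieve_modulus_gt0.
have x_ge : 4 * INR k <= x by nra.
have [a [L [window L_ge]]] := nat_window (x / INR k) (ltac:(lra) : 0 <= x).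
exists (filter (sifted (Pbin_ndvd k alpha) w.+1) (iota a L)); split; [|split].
- exact/uniq_NoDup/filter_uniq/iota_uniq.
- apply/Forall_forall => y /In_mem; rewrite mem_filter mem_iota.
  case/andP => /sifted_no_small_prime_divisor y_sifted /window[le_xy lt_y].
  by have -> : (1 + 1 / INR k) * x = x + x / INR k by field; lra.
- rewrite -size_length size_filter; apply/Rle_ge.
  apply: Rle_trans (count_sifted_lb a L k_gt0 P_compl w_ge2).
  have dens_ge0 : 0 <= density_const k * / ln (INR w) ^ k.
    apply/Rmult_le_pos/Rlt_le/Rinv_0_lt_compat/pow_lt/ln_INR_gt0 => //.
    exact/Rlt_le/density_const_gt0.
  have -> : density_const k / (4 * INR k) * / ln (INR w) ^ k * x =
            x / (4 * INR k) * (density_const k * / ln (INR w) ^ k) by rewrite /Rdiv; ring.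
  apply: Rmult_le_compat_r => //.
  have : INR (sieve_modulus (Pbin_exp k) w.+1) <= x / (4 * INR k).
    by apply: (Rmult_le_reg_r (4 * INR k)); [lra | rewrite /Rdiv Rmult_assoc Rinv_l; lra].
  have : 4 <= x / INR k.
    by apply: (Rmult_le_reg_r (INR k)) => //; rewrite /Rdiv Rmult_assoc Rinv_l; lra.
  have -> : x / (4 * INR k) = x / INR k / 4 by field; lra.
  lra.
Qed.

Theorem lemma3p3 :
  forall k : nat, le 1 k ->
  exists c : R, c > 0 /\
  forall alpha : nat -> Z,
    alpha k <> 0%Z ->
    complete (Pbin k alpha) ->
    exists x0 : R, forall x : R, x >= x0 ->
      forall w : nat, lt 1 w -> INR w < ln x / 2 ->
        exists l : list nat,
          NoDup l /\
          Forall (fun y => x <= INR y /\ INR y < (1 + 1 / INR k) * x /\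
                           no_small_prime_divisor w (Pbin k alpha y)) l /\
          INR (length l) >= c * / (ln (INR w)) ^ k * x.
Proof.
move=> k /leP k_gt0; have k_pos : 0 < INR k by apply/lt_0_INR/ltP.
exists (density_const k / (4 * INR k)); split.
  by apply: Rdiv_lt_0_compat; [exact: density_const_gt0 | lra].
move=> alpha _ P_compl.
set M := INR (4 * k * sieve_base k).
have M_ge1 : 1 <= M.
  apply/(le_INR 1)/leP; rewrite !muln_gt0 k_gt0 /=.
  by apply: prodn_cond_gt0 => p /prime_gt0 p_gt0; rewrite expn_gt0 p_gt0.
exists (M ^ 10) => x /Rge_le x_ge w /ltP w_gt1 w_lt.
apply: exists_sifted_in_interval => //.
apply: Rle_trans (pow4_le_of_lt_half_ln M_ge1 x_ge w_lt).
have four : INR 4 = 4 by rewrite INR_IZR_INZ.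
have := le_INR _ _ (leP (Pbin_sieve_modulus_le k w)).
rewrite /M !INR_muln INR_expn four; nra.
Qed.
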